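(* Let $A=2^\omega$, the set of subsets of $\omega$, partially ordered by inclusion, and let $U_\subseteq(A)\subseteq 2^A$ be its set of up-sets. For each $n\in\omega$ let $e_n\in U_\subseteq(A)$ be the set of subsets of $\omega$ containing $n$. Then for $x\in U_\subseteq(A)$ the following are equivalent: (i) $x$ is an isolated point of $U_\subseteq(A)$ in the topology induced by the natural topology on $2^A$; (ii) $x$ is both the union of a finite (possibly empty) family of principal up-sets of $A$ and the intersection of a finite (possibly empty) family of complements of principal down-sets of $A$; (iii) $x$ lies in the closure of $\{e_n\mid n\in\omega\}\cup\{\emptyset,A\}$ under pairwise unions and intersections.
   Context: An up-set of a poset is a subset closed upward; ${\uparrow}(a)=\{b\mid b\supseteq a\}$ and ${\downarrow}(a)=\{b\mid b\subseteq a\}$ are the principal up-set and principal down-set determined by $a\in A$; complements are in $A$. The natural topology on $2^A$ (the set of subsets of $A$) is the product topology of copies of the discrete space $\{0,1\}$, with subbasis the sets $\{x\mid a\in x\}$ and $\{x\mid a\notin x\}$ for $a\in A$. *)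

From mathcomp Require Import all_boot.
From mathcomp Require Import boolp classical_sets.
Set Implicit Arguments. Unset Strict Implicit. Unset Printing Implicit Defensive.
Local Open Scope classical_set_scope.

(* A = 2^omega, ordered by inclusion; elements of 2^A are [set (set nat)]. *)
Definition Aset := set nat.

Definition upset (x : set Aset) : Prop :=
  forall a b : Aset, a `<=` b -> x a -> x b.

Definition up (a : Aset) : set Aset := [set b | a `<=` b].
Definition down (a : Aset) : set Aset := [set b | b `<=` a].

(* Basic open sets of the product topology on 2^A: finite intersections of
   subbasic sets {x | a \in x} (bit true) and {x | a \notin x} (bit false). *)
Definition basic_open (n : nat) (s : nat -> Aset) (bt : nat -> bool)
  : set (set Aset) :=
  [set y | forall i, (i < n)%N -> (y (s i) <-> bt i = true)].

Definition natural_open (V : set (set Aset)) : Prop :=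
  forall y, V y -> exists n s bt, basic_open n s bt y /\ basic_open n s bt `<=` V.

Definition isolated_in (U : set (set Aset)) (x : set Aset) : Prop :=
  U x /\ exists V, natural_open V /\ V `&` U = [set x].

Definition e_ (n : nat) : set Aset := [set b | b n].

Inductive lattice_gen : set Aset -> Prop :=
  | lg_e : forall n, lattice_gen (e_ n)
  | lg_empty : lattice_gen set0
  | lg_full : lattice_gen setT
  | lg_union : forall x y, lattice_gen x -> lattice_gen y -> lattice_gen (x `|` y)
  | lg_inter : forall x y, lattice_gen x -> lattice_gen y -> lattice_gen (x `&` y).

Definition fin_union_up (x : set Aset) : Prop :=
  exists (n : nat) (a : nat -> Aset),
    x = [set b | exists i, (i < n)%N /\ up (a i) b].

Definition fin_inter_compl_down (x : set Aset) : Prop :=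
  exists (m : nat) (c : nat -> Aset),
    x = [set b | forall i, (i < m)%N -> (~` down (c i)) b].

From mathcomp Require Import all_boot.
From mathcomp Require Import boolp classical_sets.
From mathcomp Require Import zify.
From Stdlib Require List.
Set Implicit Arguments. Unset Strict Implicit.
Local Open Scope classical_set_scope.

(* A basic open set of 2^A prescribes that finitely many a belong to y and
   finitely many c do not.  For an up-set y this says exactly that the union
   of the up(a) is contained in y and that y is contained in the intersection
   of the complements of the down(c).  Both of these bounds are up-sets lying
   in that same basic open set, so if it isolates x they both equal x, which
   is (ii); conversely (ii) provides such a basic open set.
   The sets as in (ii) are closed under union and intersection and contain
   e_n, the empty set and A.  Conversely, if up(a) <= x = /\_c ~down(c),
   choosing k_c in a \ c gives up(a) <= e_(k_1) /\ ... /\ e_(k_m) <= x, so x is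
   a finite union of finite intersections of the e_n. *)

Section ListIndexing.
Variable T : Type.

Lemma In_nthP (d : T) (l : list T) t :
  List.In t l <-> exists2 i, (i < length l)%N & List.nth i l d = t.
Proof.
split=> [/(List.In_nth _ _ d) [i [/ltP lti <-]] | [i /ltP lti <-]].
- by exists i.
- exact: List.nth_In.
Qed.

Lemma In_map_filter_iotaP (s : nat -> T) (P : pred nat) n t :
  List.In t (List.map s (List.filter P (List.seq 0 n))) <->
  exists2 i, (i < n) && P i & s i = t.
Proof.
rewrite List.in_map_iff; split.
- move=> [i [<- /List.filter_In [/List.in_seq lti Pi]]]; exists i => //.
  by rewrite Pi andbT; apply/ltP; lia.
- move=> [i /andP [/ltP lti Pi] <-]; exists i; split => //.
  by apply/List.filter_In; split => //; apply/List.in_seq; lia.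
Qed.

End ListIndexing.

Definition up_union (l : list Aset) : set Aset :=
  [set b | exists2 a, List.In a l & a `<=` b].

Definition down_compl_inter (l : list Aset) : set Aset :=
  [set b | forall c, List.In c l -> ~ b `<=` c].

Definition up_down_finite (x : set Aset) : Prop :=
  (exists l, x = up_union l) /\ (exists l, x = down_compl_inter l).

Lemma fin_union_upP x : fin_union_up x <-> exists l, x = up_union l.
Proof.
split=> [[n [a ->]] | [l ->]].
- exists (List.map a (List.filter predT (List.seq 0 n))); apply/predeqP => b.
  split=> [[i [lti ab]] | [t /In_map_filter_iotaP [i /andP [lti _] <-] ab]].
  + by exists (a i) => //; apply/In_map_filter_iotaP; exists i; rewrite ?lti.
  + by exists i.
- exists (length l), (fun i => List.nth i l set0); apply/predeqP => b.
  split=> [[t /(In_nthP set0) [i lti <-] tb] | [i [lti ab]]].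
  + by exists i.
  + by exists (List.nth i l set0) => //; apply/(In_nthP set0); exists i.
Qed.

Lemma fin_inter_compl_downP x :
  fin_inter_compl_down x <-> exists l, x = down_compl_inter l.
Proof.
split=> [[n [c ->]] | [l ->]].
- exists (List.map c (List.filter predT (List.seq 0 n))); apply/predeqP => b.
  split=> [bc t /In_map_filter_iotaP [i /andP [lti _] <-] | bc i lti].
  + exact: bc.
  + by apply: bc; apply/In_map_filter_iotaP; exists i; rewrite ?lti.
- exists (length l), (fun i => List.nth i l set0); apply/predeqP => b.
  split=> [bc i lti | bc t /(In_nthP set0) [i lti <-]]; apply: bc => //.
  by apply/(In_nthP set0); exists i.
Qed.

Lemma not_down_compl_inter l (b : Aset) :
  ~ down_compl_inter l b -> exists2 c, List.In c l & b `<=` c.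
Proof.
move=> nb; apply: contrapT => nc; apply: nb => c lc bc.
by apply: nc; exists c.
Qed.

Lemma upset_up_union l : upset (up_union l).
Proof. by move=> a b ab [c lc ca]; exists c => //; apply: subset_trans ab. Qed.

Lemma upset_down_compl_inter l : upset (down_compl_inter l).
Proof. by move=> a b ab la c /la nac bc; apply: nac; apply: subset_trans bc. Qed.

Definition cylinder (l1 l2 : list Aset) : set (set Aset) :=
  [set y | (forall a, List.In a l1 -> y a) /\ (forall c, List.In c l2 -> ~ y c)].

Lemma basic_open_cylinder n s bt : basic_open n s bt =
  cylinder (List.map s (List.filter bt (List.seq 0 n)))
           (List.map s (List.filter (predC bt) (List.seq 0 n))).
Proof.
apply/predeqP => y; split=> [By | [pos neg] i lti].
- split=> t /In_map_filter_iotaP [i /andP [lti bti] <-].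
  + exact/(By i lti).
  + by move/(By i lti); move/negPf: bti => ->.
- case bti: (bt i); split=> // yi.
  + by apply: pos; apply/In_map_filter_iotaP; exists i; rewrite ?lti ?bti.
  + by case: (neg (s i) _ yi); apply/In_map_filter_iotaP; exists i; rewrite ?lti /= ?bti.
Qed.

Lemma cylinder_basic_open l1 l2 : cylinder l1 l2 =
  basic_open (length l1 + length l2) (fun i => List.nth i (l1 ++ l2)%list set0)
             (fun i => i < length l1).
Proof.
apply/predeqP => y.
split=> [[pos neg] i lti | By]; last split.
- have [lt1 | ge1] := ltnP i (length l1).
  + rewrite List.app_nth1; last exact/ltP.
    by split=> // _; apply: pos; apply/(In_nthP (set0 : Aset)); exists i.
  + rewrite List.app_nth2; last exact/leP.
    split=> // yi; case: (neg _ _ yi); apply/(In_nthP (set0 : Aset)).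
    by exists (i - length l1)%N => //; lia.
- move=> a /(In_nthP (set0 : Aset)) [i lti <-].
  have /By [_ ya] : (i < length l1 + length l2)%N by lia.
  by move: ya; rewrite List.app_nth1; [apply | apply/ltP].
- move=> c /(In_nthP (set0 : Aset)) [j ltj <-].
  have /By [yc _] : (length l1 + j < length l1 + length l2)%N by lia.
  move: yc; rewrite List.app_nth2; last by apply/leP; lia.
  have -> : (length l1 + j - length l1)%coq_nat = j by lia.
  by move=> yc /yc; rewrite ltnNge leq_addr.
Qed.

Lemma cylinder_upsetE l1 l2 y : upset y ->
  cylinder l1 l2 y <-> up_union l1 `<=` y /\ y `<=` down_compl_inter l2.
Proof.
move=> Uy; split=> [[pos neg] | [sub1 sub2]]; split.
- by move=> b [a /pos ya ab]; apply: Uy ab ya.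
- by move=> b yb c /neg nyc bc; apply: nyc; apply: Uy bc yb.
- by move=> a la; apply: sub1; exists a.
- by move=> c lc /sub2 /(_ c lc); apply.
Qed.

Lemma isolated_upsetP x : upset x -> isolated_in upset x <->
  exists l1 l2, cylinder l1 l2 x /\ forall y, upset y -> cylinder l1 l2 y -> y = x.
Proof.
move=> Ux; split=> [[_ [V [oV Vx1]]] | [l1 [l2 [Cx Cuniq]]]].
- have [Vx _] : (V `&` upset) x by rewrite Vx1.
  have [n [s [bt [Bx BV]]]] := oV x Vx.
  move: Bx BV; rewrite basic_open_cylinder => Cx CV.
  do 2 eexists; split; first exact: Cx.
  move=> y Uy Cy; suff: (V `&` upset) y by rewrite Vx1.
  by split=> //; apply: CV.
- split=> //; exists (cylinder l1 l2); split.
  + by rewrite cylinder_basic_open => y By; do 3 eexists; split; first exact: By.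
  + by apply/predeqP => y; split=> [[Cy Uy] | ->]; [exact: Cuniq | split].
Qed.

Lemma isolated_upset_up_down_finite x : upset x ->
  isolated_in upset x <-> up_down_finite x.
Proof.
move=> Ux; rewrite isolated_upsetP //; split.
- move=> [l1 [l2 [Cx Cuniq]]]; have [sub1 sub2] := (cylinder_upsetE _ _ Ux).1 Cx.
  split; [exists l1 | exists l2]; symmetry; apply: Cuniq.
  + exact: upset_up_union.
  + apply/cylinder_upsetE; first exact: upset_up_union.
    by split=> //; apply: subset_trans sub2.
  + exact: upset_down_compl_inter.
  + apply/cylinder_upsetE; first exact: upset_down_compl_inter.
    by split=> //; apply: subset_trans sub1 _.
- move=> [[l1 E1] [l2 E2]]; exists l1, l2; split.
  + by apply/cylinder_upsetE => //; rewrite -E1 -E2; split.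
  + move=> y Uy /(cylinder_upsetE _ _ Uy) [sub1 sub2].
    by apply/seteqP; split; [rewrite E2 | rewrite E1].
Qed.

Lemma up_union_app l l' : up_union (l ++ l')%list = up_union l `|` up_union l'.
Proof.
apply/predeqP => b; split.
- by move=> [a /List.in_app_iff [la | la] ab]; [left | right]; exists a.
- by move=> [[a la ab] | [a la ab]]; exists a => //; apply/List.in_app_iff; [left | right].
Qed.

Lemma up_union_prod l l' :
  up_union (List.map (fun p => p.1 `|` p.2) (List.list_prod l l')) =
  up_union l `&` up_union l'.
Proof.
apply/predeqP => b; split.
- move=> [_ /List.in_map_iff [[a a'] [<- /List.in_prod_iff [la la']]] ab].
  by split; [exists a | exists a'] => // t at'; apply: ab; [left | right].
- move=> [[a la ab] [a' la' ab']]; exists (a `|` a').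
    by apply/List.in_map_iff; exists (a, a'); split => //; apply/List.in_prod_iff.
  by move=> t [/ab | /ab'].
Qed.

Lemma down_compl_inter_app l l' :
  down_compl_inter (l ++ l')%list = down_compl_inter l `&` down_compl_inter l'.
Proof.
apply/predeqP => b; split.
- by move=> bc; split=> c lc; apply: bc; apply/List.in_app_iff; [left | right].
- by move=> [bc bc'] c /List.in_app_iff [/bc | /bc'].
Qed.

Lemma down_compl_inter_prod l l' :
  down_compl_inter (List.map (fun p => p.1 `&` p.2) (List.list_prod l l')) =
  down_compl_inter l `|` down_compl_inter l'.
Proof.
apply/predeqP => b; split=> [bc | bc _ /List.in_map_iff [[c c'] [<- /List.in_prod_iff [lc lc']]] bcc'].
- apply: contrapT => /not_orP [/not_down_compl_inter [c lc bc1] /not_down_compl_inter [c' lc' bc2]].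
  apply: (bc (c `&` c')); last by move=> t bt; split; [apply: bc1 | apply: bc2].
  by apply/List.in_map_iff; exists (c, c'); split => //; apply/List.in_prod_iff.
- by case: bc => [/(_ c lc) | /(_ c' lc')]; apply=> t /bcc' [].
Qed.

Lemma lattice_gen_up_down_finite x : lattice_gen x -> up_down_finite x.
Proof.
elim=> {x} [n | | | x y _ [[l1 E1] [l2 F1]] _ [[l1' E2] [l2' F2]]
              | x y _ [[l1 E1] [l2 F1]] _ [[l1' E2] [l2' F2]]].
- split; [exists [:: [set n]] | exists [:: ~` [set n]]]; apply/predeqP => b.
  + split=> [bn | [_ [<- | []] /(_ n erefl)] //].
    by exists [set n]; [left | move=> _ ->].
  + split=> [bn _ [<- | []] /(_ n bn) | bc]; first exact.
    apply: contrapT => nbn; apply: (bc (~` [set n])); first by left.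
    by move=> t bt tn; apply: nbn; rewrite -tn.
- split; [exists [::] | exists [:: setT]]; apply/predeqP => b.
  + by split=> // -[].
  + by split=> // /(_ setT (or_introl erefl)) [].
- split; [exists [:: set0] | exists [::]]; apply/predeqP => b.
  + by split=> // _; exists set0; first left.
  + by split=> // _ c [].
- split.
  + by exists (l1 ++ l1')%list; rewrite up_union_app -E1 -E2.
  + by exists (List.map (fun p => p.1 `&` p.2) (List.list_prod l2 l2'));
      rewrite down_compl_inter_prod -F1 -F2.
- split.
  + by exists (List.map (fun p => p.1 `|` p.2) (List.list_prod l1 l1'));
      rewrite up_union_prod -E1 -E2.
  + by exists (l2 ++ l2')%list; rewrite down_compl_inter_app -F1 -F2.
Qed.

Definition meet_e (K : list nat) : set Aset := [set b | forall k, List.In k K -> b k].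

Lemma lattice_gen_meet_e K : lattice_gen (meet_e K).
Proof.
elim: K => [|k K IH].
- have -> : meet_e [::] = setT by apply/predeqP => b; split=> // _ k [].
  exact: lg_full.
- have -> : meet_e (k :: K) = e_ k `&` meet_e K.
    apply/predeqP => b; split=> [bK | [bk bK] _ [<- | /bK] //].
    by split=> [|k' Kk']; apply: bK; [left | right].
  exact: lg_inter (lg_e k) IH.
Qed.

Lemma meet_e_between a l : down_compl_inter l a ->
  exists K, up a `<=` meet_e K /\ meet_e K `<=` down_compl_inter l.
Proof.
elim: l => [|c l IH] al.
- by exists [::]; split=> // b _ c [].
- have [K [aK Kl]] : exists K, up a `<=` meet_e K /\ meet_e K `<=` down_compl_inter l.
    by apply: IH => c' lc'; apply: al; right.
  have [k ak nck] : exists2 k, a k & ~ c k.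
    apply: contrapT => nk; apply: (al c); first by left.
    by move=> t at'; apply: contrapT => nct; apply: nk; exists t.
  exists (k :: K); split.
  + by move=> b ab k' [<- | Kk']; [apply: ab | apply: aK].
  + move=> b bK _ [<- | /(Kl b (fun k' Kk' => bK k' (or_intror Kk')))] // bc.
    by apply: nck; apply: bc; apply: bK; left.
Qed.

Lemma lattice_gen_up_union_between x l :
  (forall a, List.In a l -> exists2 y, lattice_gen y & up a `<=` y /\ y `<=` x) ->
  exists2 y, lattice_gen y & up_union l `<=` y /\ y `<=` x.
Proof.
elim: l => [|a l IH] between.
- by exists set0; [exact: lg_empty | split=> // b [_ []]].
- have [ya Lya [aya yax]] := between a (or_introl erefl).
  have [y Ly [ly yx]] : exists2 y, lattice_gen y & up_union l `<=` y /\ y `<=` x.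
    by apply: IH => a' la'; apply: between; right.
  exists (ya `|` y); first exact: lg_union.
  split=> [b [a' [<- | la'] ab] | b [/yax | /yx]] //.
  + by left; apply: aya.
  + by right; apply: ly; exists a'.
Qed.

Lemma up_down_finite_lattice_gen x : up_down_finite x -> lattice_gen x.
Proof.
move=> [[l1 E1] [l2 E2]].
have [y Ly [l1y yx]] : exists2 y, lattice_gen y & up_union l1 `<=` y /\ y `<=` x.
  apply: lattice_gen_up_union_between => a la.
  have /meet_e_between [K [aK Kl]] : down_compl_inter l2 a.
    by rewrite -E2 E1; exists a.
  by exists (meet_e K); [exact: lattice_gen_meet_e | rewrite E2].
suff -> : x = y by [].
by apply/seteqP; split=> //; rewrite E1.
Qed.

Theorem corollary5p2 (x : set Aset) :
  upset x ->
  (isolated_in upset x <-> (fin_union_up x /\ fin_inter_compl_down x)) /\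
  ((fin_union_up x /\ fin_inter_compl_down x) <-> lattice_gen x).
Proof.
move=> Ux; rewrite fin_union_upP fin_inter_compl_downP.
split; first exact: isolated_upset_up_down_finite.
split; [exact: up_down_finite_lattice_gen | exact: lattice_gen_up_down_finite].
Qed.
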